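(* For $\varepsilon>0$ and $d\in\mathbb R^{R\times R}$ let $\hat J_{\varepsilon,d}(\beta)=\sum_{i,j=1}^R\exp\big([-d(i,j)-\beta(i)+\beta(j)]/\varepsilon\big)$ for $\beta\in\mathbb R^R$. Then minimizers of $\hat J_{\varepsilon,d}$ exist. Moreover, let $\varepsilon_1>\varepsilon_2>0$, $d_1,d_2\in\mathbb R^{R\times R}$, let $\beta_1^\dagger,\beta_2^\dagger$ be minimizers of $\hat J_{\varepsilon_1,d_1}$ and $\hat J_{\varepsilon_2,d_2}$, $\Delta d=d_2-d_1$, $\Delta\beta=\beta_2^\dagger-\beta_1^\dagger$, and $w\in\mathbb R^{R\times R}$, $w(i,j)=\max\{-\Delta d(i,j),\Delta d(j,i)\}$. Then $$\max\Delta\beta-\min\Delta\beta\le\mathrm{maxdiam}(w)+2\varepsilon_1R\log R,$$ where $\mathrm{maxdiam}(w)=\max\big\{\sum_{i=1}^{k-1}w(j_i,j_{i+1}):k\in\{2,\dots,R\},\ j_1,\dots,j_k\in\{1,\dots,R\}\text{ pairwise distinct}\big\}$ is the length of the longest cycle-free path in $\{1,\dots,R\}$ with edge lengths $w$.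
   Context: $\max\Delta\beta$ and $\min\Delta\beta$ denote the largest and smallest entries of the vector $\Delta\beta$. *)

From HB Require Import structures.
From mathcomp Require Import all_boot all_order all_algebra.
From mathcomp Require Import all_classical all_reals all_analysis.
Set Implicit Arguments. Unset Strict Implicit. Unset Printing Implicit Defensive.
Import Order.TTheory GRing.Theory Num.Theory.
Local Open Scope ring_scope.

(* Points are indexed by 'I_m (m = R in the paper). *)

Definition Jhat (R : realType) (m : nat) (eps : R) (d : 'I_m -> 'I_m -> R)
  (beta : 'I_m -> R) : R :=
  \sum_(i < m) \sum_(j < m) expR ((- d i j - beta i + beta j) / eps).

Definition is_minimizer (R : realType) (m : nat) (f : ('I_m -> R) -> R)
  (b : 'I_m -> R) : Prop := forall b' : 'I_m -> R, f b <= f b'.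

Definition vmax (R : realType) (n : nat) (v : 'I_n.+1 -> R) : R :=
  \big[Num.max/v ord0]_(i < n.+1) v i.
Definition vmin (R : realType) (n : nat) (v : 'I_n.+1 -> R) : R :=
  \big[Num.min/v ord0]_(i < n.+1) v i.

Definition pathlen (R : realType) (m : nat) (w : 'I_m -> 'I_m -> R)
  (s : seq 'I_m) : R :=
  \sum_(p <- zip s (behead s)) w p.1 p.2.

(* The default 0 of the fold only matters when m <= 1
   (empty maximum); for m >= 2 the true maximum is >= 0 for the w of the
   theorem. *)
Definition maxdiam (R : realType) (m : nat) (w : 'I_m -> 'I_m -> R) : R :=
  \big[Num.max/0]_(k < m.+1 | (2 <= k)%N)
     \big[Num.max/0]_(s : k.-tuple 'I_m | uniq s) pathlen w s.

From HB Require Import structures.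
From mathcomp Require Import all_boot all_order all_algebra.
From mathcomp Require Import all_classical all_reals all_analysis.
From mathcomp Require Import ring lra.
Import Order.TTheory GRing.Theory Num.Theory.
Import numFieldNormedType.Exports.
Local Open Scope ring_scope.

Set Implicit Arguments.
Unset Strict Implicit.
Unset Printing Implicit Defensive.

(* Existence: [Jhat] is continuous and unchanged when a constant is added to
   [beta]; normalising [beta ord0 = 0], its sublevel set [Jhat <= Jhat 0]
   lies in a compact box, where the extreme value theorem applies.

   Stability: perturbing a minimizer to [beta + eps ln x * 1_A] and letting
   [x] vary shows that the coupling [exp ((- d i j - beta i + beta j) / eps)]
   carries as much mass into any set [A] as out of it.  A cut has at most
   [R^2] edges, so the exponent of every edge leaving [A] exceeds the largest
   entering exponent by at most [2 eps ln R].  Comparing the two minimizers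
   across the same cut (using [eps2 <= eps1]) yields an edge [i -> j] leaving
   [A] with [Db i - Db j <= w i j + 2 eps1 ln R].  Hence every vertex is reached
   from every other along such edges; a cycle-free path has fewer than [R]
   edges, and summing along it gives the bound. *)

Lemma connect_of_cuts (T : finType) (e : rel T) a b :
  (forall A : {set T}, a \in A -> b \notin A ->
     exists i j, [/\ i \in A, j \notin A & e i j]) ->
  connect e a b.
Proof.
move=> cut; apply: contraT => not_ab.
have := cut [set x | connect e a x]; rewrite !inE connect0.
move=> /(_ isT not_ab) [i [j]]; rewrite !inE => -[ai aj eij].
by rewrite (connect_trans ai (connect1 eij)) in aj.
Qed.

Lemma telescope_path_le (T : eqType) (R : realDomainType) (f : T -> R)
    (w : T -> T -> R) c a p :
  path [rel u v | f u - f v <= w u v + c] a p ->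
  f a - f (last a p) <= \sum_(e <- zip (a :: p) p) w e.1 e.2 + c *+ size p.
Proof.
elim: p a => [|x p IHp] a /=; first by rewrite big_nil subrr addr0.
move=> /andP[fax /IHp]; rewrite big_cons /= mulrS; lra.
Qed.

Lemma size_uniq_le_ord m (s : seq 'I_m) : uniq s -> (size s <= m)%N.
Proof.
by move/card_uniqP <-; apply: leq_trans (max_card _) _; rewrite card_ord.
Qed.

Lemma ln_natr_ge0 (R : realType) m : 0 <= ln (m%:R : R).
Proof. by case: m => [|m]; [rewrite ln0 | apply: ln_ge0; rewrite ler1n]. Qed.

Lemma pathlen_le_maxdiam (R : realType) m (w : 'I_m -> 'I_m -> R) a p :
  uniq (a :: p) -> pathlen w (a :: p) <= maxdiam w.
Proof.
case: p => [|x p] up; first by rewrite /pathlen big_nil bigmax_ge_id.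
have k_lt : (size (a :: x :: p) < m.+1)%N by rewrite ltnS size_uniq_le_ord.
apply: le_trans (le_bigmax_cond _ (j := Ordinal k_lt) _ _) => //.
exact: (le_bigmax_cond _ (j := in_tuple (a :: x :: p))).
Qed.

Lemma vmax_sub_vmin_le (R : realType) n (v : 'I_n.+1 -> R) c :
  (forall i j, v i - v j <= c) -> vmax v - vmin v <= c.
Proof.
move=> vc.
have min_ge i : v i - c <= vmin v.
  have le_vj j : v i - c <= v j by have := vc i j; lra.
  by apply: le_bigmin.
suff : vmax v <= vmin v + c by lra.
have le_vi i : v i <= vmin v + c by have := min_ge i; lra.
by apply: bigmax_le.
Qed.

Lemma eq_of_perturbation_ge0 (R : realFieldType) (a b : R) :
  0 <= a -> 0 <= b ->
  (forall x, 0 < x -> 0 <= (x - 1) * a + (x^-1 - 1) * b) -> a = b.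
Proof.
move=> a_ge0 b_ge0 perturb.
have [ab0|ab_neq0] := eqVneq (a + b) 0; first lra.
have ab_gt0 : 0 < a + b by rewrite lt_def ab_neq0; lra.
have [den1_gt0 den2_gt0] : 0 < 3 * a + b /\ 0 < a + 3 * b by lra.
have := perturb ((a + 3 * b) / (3 * a + b)) (divr_gt0 den2_gt0 den1_gt0).
rewrite invf_div.
have -> : ((a + 3 * b) / (3 * a + b) - 1) * a
          + ((3 * a + b) / (a + 3 * b) - 1) * b =
    - (2 * (b - a) ^+ 2 * (a + b)) / ((3 * a + b) * (a + 3 * b)).
  by field; rewrite !gt_eqF.
rewrite mulNr oppr_ge0 pmulr_lle0 ?invr_gt0 ?mulr_gt0 // => le0.
have : (b - a) ^+ 2 == 0 by rewrite eq_le sqr_ge0 andbT; nra.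
by rewrite sqrf_eq0 subr_eq0 => /eqP.
Qed.

Section Coupling.
Variables (R : realType) (m : nat) (eps : R) (d : 'I_m -> 'I_m -> R).
Hypothesis eps_gt0 : 0 < eps.

Definition coupling (b : 'I_m -> R) i j := expR ((- d i j - b i + b j) / eps).

Definition flow b (e : rel 'I_m) := \sum_i \sum_(j | e i j) coupling b i j.

Definition entering (A : {set 'I_m}) : rel 'I_m :=
  fun i j => (i \notin A) && (j \in A).

Lemma flow_ge0 b (e : rel 'I_m) : 0 <= flow b e.
Proof.
by apply: sumr_ge0 => i _; apply: sumr_ge0 => j _; exact/ltW/expR_gt0.
Qed.

Lemma coupling_le_flow b (e : rel 'I_m) i j :
  e i j -> coupling b i j <= flow b e.
Proof.
move=> eij; rewrite /flow (bigD1 i) //= (bigD1 j) //= -addrA lerDl.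
rewrite addr_ge0 ?sumr_ge0 // => k _; first exact/ltW/expR_gt0.
by apply: sumr_ge0 => l _; exact/ltW/expR_gt0.
Qed.

Lemma flow_le b (e : rel 'I_m) c : 0 <= c ->
  (forall i j, e i j -> coupling b i j <= c) -> flow b e <= m%:R ^+ 2 * c.
Proof.
move=> c_ge0 le_c; apply: (@le_trans _ _ (\sum_(i < m) \sum_(j < m) c)).
  apply: ler_sum => i _; rewrite big_mkcond /=; apply: ler_sum => j _.
  by case: ifP => // /le_c.
by rewrite !sumr_const card_ord -mulrnA -[c *+ _]mulr_natl natrM expr2.
Qed.

Lemma coupling_le_Jhat b i j : coupling b i j <= Jhat eps d b.
Proof. exact: (@coupling_le_flow b (fun _ _ => true)). Qed.

Lemma Jhat_perturb b (A : {set 'I_m}) x : 0 < x ->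
  Jhat eps d (fun i => b i + (i \in A)%:R * (eps * ln x)) =
  Jhat eps d b + (x - 1) * flow b (entering A)
    + (x^-1 - 1) * flow b (entering (~: A)).
Proof.
move=> x_gt0; rewrite /Jhat /flow !mulr_sumr -!big_split.
apply: eq_bigr => i _ /=.
rewrite (big_mkcond (entering A i)) (big_mkcond (entering (~: A) i)) /=.
rewrite !mulr_sumr -!big_split; apply: eq_bigr => j _ /=.
have eps_neq0 : eps != 0 by rewrite gt_eqF.
have shift (s t : R) :
    expR ((- d i j - (b i + s * (eps * ln x)) + (b j + t * (eps * ln x)))
          / eps) =
    coupling b i j * expR ((t - s) * ln x).
  by rewrite -expRD; congr expR; field.
rewrite /entering !inE shift -/(coupling b i j).
case: (i \in A); case: (j \in A) => /=;
  rewrite ?subrr ?subr0 ?sub0r ?mul0r ?mulN1r ?mul1r ?expR0 ?expRN ?lnK //;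
  ring.
Qed.

Lemma minimizer_flow_balance b A : is_minimizer (Jhat eps d) b ->
  flow b (entering A) = flow b (entering (~: A)).
Proof.
move=> b_min.
apply: eq_of_perturbation_ge0 => [||x x_gt0]; rewrite ?flow_ge0 //.
have := b_min (fun i => b i + (i \in A)%:R * (eps * ln x)).
by rewrite Jhat_perturb // -addrA lerDl.
Qed.

Lemma minimizer_cut_exponent b (A : {set 'I_m}) i0 j0 :
  is_minimizer (Jhat eps d) b -> entering A i0 j0 ->
  exists p q, entering A p q /\
    forall i j, entering (~: A) i j ->
      - d i j - b i + b j <= - d p q - b p + b q + 2 * eps * ln m%:R.
Proof.
move=> b_min in0.
pose gap (e : 'I_m * 'I_m) := - d e.1 e.2 - b e.1 + b e.2.
have [[p q] /= pq_in pq_max] :=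
  @arg_maxP _ _ _ (i0, j0) (fun e => entering A e.1 e.2) gap in0.
exists p, q; split => // i j ij_out.
have m_gt0 : (0 < m)%N := leq_ltn_trans (leq0n i) (ltn_ord i).
have : coupling b i j <= m%:R ^+ 2 * coupling b p q.
  apply: le_trans (@coupling_le_flow b (entering (~: A)) i j ij_out) _.
  rewrite -minimizer_flow_balance //; apply: flow_le => [|k l kl_in].
    exact/ltW/expR_gt0.
  by rewrite ler_expR ler_pM2r ?invr_gt0 //; exact: (pq_max (k, l)).
rewrite /coupling -[_ ^+ 2]lnK ?posrE ?exprn_gt0 ?ltr0n // -expRD ler_expR.
rewrite lnXn ?ltr0n // ler_pdivrMr // mulrDl divfK ?gt_eqF // -mulr_natr.
lra.
Qed.

Lemma Jhat_shift b c : Jhat eps d (fun i => b i - c) = Jhat eps d b.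
Proof.
by apply: eq_bigr => i _; apply: eq_bigr => j _; congr (expR (_ / _)); ring.
Qed.

Lemma Jhat_sublevel_diff b J i j :
  Jhat eps d b <= J -> b j - b i <= eps * ln J + d i j.
Proof.
move=> bJ; have le_J := le_trans (coupling_le_Jhat b i j) bJ.
have J_gt0 : 0 < J := lt_le_trans (expR_gt0 _) le_J.
move: le_J; rewrite -[X in _ <= X -> _]lnK ?posrE // ler_expR ler_pdivrMr //.
lra.
Qed.

Lemma Jhat_continuous : continuous (fun v : 'rV[R]_m => Jhat eps d (v ord0)).
Proof.
apply: continuous_big => [|i _]; first by apply: add_continuous.
apply: continuous_big => [|j _ v]; first by apply: add_continuous.
apply: continuous_comp; last exact: continuous_expR.
apply: continuousM; last exact: cst_continuous.
apply: continuousD; last exact: coord_continuous.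
apply: continuousD; first exact: cst_continuous.
by apply: continuousN; exact: coord_continuous.
Qed.

End Coupling.

Definition edge_len (R : realType) m (d1 d2 : 'I_m -> 'I_m -> R) i j :=
  Num.max (- (d2 i j - d1 i j)) (d2 j i - d1 j i).

Lemma Jhat_has_minimizer (R : realType) n (eps : R)
    (d : 'I_n.+1 -> 'I_n.+1 -> R) :
  0 < eps -> exists beta, is_minimizer (Jhat eps d) beta.
Proof.
move=> eps_gt0.
pose J0 := Jhat eps d (fun=> 0).
pose seg i := `[- (eps * ln J0 + d i ord0), eps * ln J0 + d ord0 i]%classic.
pose box := [set v : 'rV[R]_n.+1 | forall i, seg i (v ord0 i)]%classic.
have row_ord0 (f : 'I_n.+1 -> R) : (\row_i f i) ord0 = f.
  by apply/funext => i; rewrite mxE.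
have sublevel_box b : b ord0 = 0 -> Jhat eps d b <= J0 -> \row_i b i \in box.
  move=> b0 bJ; apply/mem_set => i; rewrite row_ord0 /seg /= in_itv /=.
  have := Jhat_sublevel_diff eps_gt0 i ord0 bJ.
  have := Jhat_sublevel_diff eps_gt0 ord0 i bJ.
  by rewrite b0 => le_hi le_lo; apply/andP; split; lra.
have box0 : \row_i (0 : R) \in box by exact: (sublevel_box (fun=> 0)).
have box_compact : compact box.
  by apply: (@rV_compact _ _ seg) => i; exact: segment_compact.
have [c _ c_min] := EVT_min_rV (ex_intro _ _ (set_mem box0)) box_compact
  (continuous_subspaceT (@Jhat_continuous R n.+1 eps d)).
exists (c ord0) => b; rewrite -(Jhat_shift eps d b (b ord0)).
have [J_le|J_gt] := leP (Jhat eps d (fun i => b i - b ord0)) J0.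
  by have := c_min _ (sublevel_box _ (subrr _) J_le); rewrite row_ord0.
by have := c_min _ box0; rewrite row_ord0 => /le_trans; apply; exact: ltW.
Qed.

Lemma cut_edge_le (R : realType) m (eps1 eps2 : R)
    (d1 d2 : 'I_m -> 'I_m -> R) (b1 b2 : 'I_m -> R) (S : {set 'I_m}) a b :
  0 < eps2 -> eps2 <= eps1 ->
  is_minimizer (Jhat eps1 d1) b1 -> is_minimizer (Jhat eps2 d2) b2 ->
  a \in S -> b \notin S ->
  exists i j, [/\ i \in S, j \notin S &
    (b2 i - b1 i) - (b2 j - b1 j) <= edge_len d1 d2 i j + 2 * eps1 * ln m%:R].
Proof.
move=> eps2_gt0 eps21 b1_min b2_min aS bS.
set slack := 2 * eps1 * ln m%:R.
have eps1_gt0 : 0 < eps1 := lt_le_trans eps2_gt0 eps21.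
have ba_in : entering S b a by rewrite /entering aS bS.
have ab_out : entering (~: S) a b by rewrite /entering !inE aS bS.
have [p [q [pq_in out_le1]]] := minimizer_cut_exponent eps1_gt0 b1_min ba_in.
have [i [j [ij_out in_le2]]] := minimizer_cut_exponent eps2_gt0 b2_min ab_out.
rewrite finset.setCK in in_le2.
have := out_le1 i j ij_out; have := in_le2 p q pq_in.
move: pq_in ij_out; rewrite /entering !inE negbK => /andP[pS qS] /andP[iS jS].
have [ij_ok|ij_bad] :=
  leP ((b2 i - b1 i) - (b2 j - b1 j)) (edge_len d1 d2 i j + slack).
  by exists i, j.
have [qp_ok|qp_bad] :=
  leP ((b2 q - b1 q) - (b2 p - b1 p)) (edge_len d1 d2 q p + slack).
  by exists q, p.
have ij_len : - (d2 i j - d1 i j) <= edge_len d1 d2 i j by rewrite le_max lexx.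
have qp_len : d2 p q - d1 p q <= edge_len d1 d2 q p.
  by rewrite le_max lexx orbT.
have : 0 <= (eps1 - eps2) * ln m%:R by rewrite mulr_ge0 ?subr_ge0 ?ln_natr_ge0.
move: ij_bad qp_bad; rewrite /slack; lra.
Qed.

Lemma minimizers_diff_le (R : realType) m (eps1 eps2 : R)
    (d1 d2 : 'I_m -> 'I_m -> R) (b1 b2 : 'I_m -> R) a b :
  0 < eps2 -> eps2 <= eps1 ->
  is_minimizer (Jhat eps1 d1) b1 -> is_minimizer (Jhat eps2 d2) b2 ->
  (b2 a - b1 a) - (b2 b - b1 b) <=
    maxdiam (edge_len d1 d2) + 2 * eps1 * m%:R * ln m%:R.
Proof.
move=> eps2_gt0 eps21 b1_min b2_min.
set c := 2 * eps1 * ln m%:R.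
pose Db i := b2 i - b1 i.
have /connectP[p e_p ->] :
    connect [rel u v | Db u - Db v <= edge_len d1 d2 u v + c] a b.
  apply: connect_of_cuts => S aS bS.
  exact: (cut_edge_le eps2_gt0 eps21 b1_min b2_min aS bS).
case/shortenP: e_p => p' e_p' uniq_p' _.
have := telescope_path_le e_p'.
have := pathlen_le_maxdiam (edge_len d1 d2) uniq_p'.
have c_ge0 : 0 <= c.
  by rewrite !mulr_ge0 ?ln_natr_ge0 // (le_trans (ltW eps2_gt0) eps21).
have : c *+ size p' <= c *+ m.
  exact: ler_wpMn2l c_ge0 _ _ (ltnW (size_uniq_le_ord uniq_p')).
have : 2 * eps1 * m%:R * ln m%:R = c *+ m by rewrite -mulr_natr /c; ring.
rewrite /pathlen /Db /=; lra.
Qed.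

(* R (number of points in the paper) is n.+1 here *)
Theorem mainTheorem9 (R : realType) (n : nat) :
  (forall (eps : R) (d : 'I_n.+1 -> 'I_n.+1 -> R), 0 < eps ->
     exists beta : 'I_n.+1 -> R, is_minimizer (Jhat eps d) beta) /\
  (forall (eps1 eps2 : R) (d1 d2 : 'I_n.+1 -> 'I_n.+1 -> R)
          (beta1 beta2 : 'I_n.+1 -> R),
     0 < eps2 -> eps2 < eps1 ->
     is_minimizer (Jhat eps1 d1) beta1 ->
     is_minimizer (Jhat eps2 d2) beta2 ->
     let Dd := fun i j => d2 i j - d1 i j in
     let Db := fun i => beta2 i - beta1 i in
     let w := fun i j => Num.max (- Dd i j) (Dd j i) in
     vmax Db - vmin Db <=
       maxdiam w + 2 * eps1 * (n.+1)%:R * ln ((n.+1)%:R : R)).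
Proof.
split=> [eps d | eps1 eps2 d1 d2 beta1 beta2 eps2_gt0 eps21 b1_min b2_min /=].
  exact: Jhat_has_minimizer.
apply: vmax_sub_vmin_le => i j.
exact: minimizers_diff_le eps2_gt0 (ltW eps21) b1_min b2_min.
Qed.
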